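(* Assume the setting of the context (in particular $u=0$ and $p>k$, so $0<\vartheta<\pi$). Let $X_e=\{(\alpha,r)\in\mathbb R\times\mathbb R_+ : r\cos\alpha\le 1 \text{ or } |\alpha|\ge\pi/2\}$ and, with $\tau(\alpha,r)=(\alpha-\vartheta,r)$, let $X_u=\bigcap_{m\in\mathbb Z}\tau^m(X_e)$. Then $Q_u=(\mathbb C\times X_u)\cap\tilde L$, and every point $(z,\alpha,r)\in Q_u$ satisfies $$r\le \frac{1}{\cos\frac{\vartheta}{2}}.$$
   Context: Let $\tilde L=\{(z,\alpha,r)\in\mathbb C\times\mathbb R\times\mathbb R_{>0} : |z|<r\}$, $L=\{(z,w)\in\mathbb C^2: |z|<|w|\}$, and $\pi:\tilde L\to L$, $\pi(z,\alpha,r)=(z,re^{i\alpha})$ (a universal covering). Equip $\mathbb C^2$ with the real symmetric bilinear form $\langle (z_1,w_1),(z_2,w_2)\rangle=\mathrm{Re}(z_1\bar z_2-w_1\bar w_2)$. Let $G=\{(z,w):|z|^2-|w|^2=-1\}\subset L$, identified with $\mathrm{SU}(1,1)$ via $\begin{pmatrix} w&z\\ \bar z&\bar w\end{pmatrix}\mapsto (z,\bar w)$; then left multiplication by $g\leftrightarrow(z_g,\bar w_g)$ extends to the $\mathbb R$-linear isometry $(z,v)\mapsto (w_g z+z_g v,\ \bar z_g z+\bar w_g v)$ of $\mathbb C^2$ preserving $L$. Let $\tilde G=\{(z,\alpha,r)\in\tilde L: |z|^2=r^2-1\}=\pi^{-1}(G)$, the universal cover $\widetilde{\mathrm{SU}}(1,1)$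 with identity $e=(0,0,1)$; the left action of $G$ on $L$ lifts to a left action of $\tilde G$ on $\tilde L$ extending left multiplication on $\tilde G$. Elements of $\tilde G$ act on the unit disk $\mathbb D$ through $\mathrm{PSU}(1,1)$: $(z,\alpha,r)$ with $w=re^{-i\alpha}$ acts by $\zeta\mapsto (w\zeta+z)/(\bar z\zeta+\bar w)$. For $g\in\tilde G$ with $\bar g=\pi(g)$, let $\bar I_{\bar g}=\{a\in L:\langle \bar g,a\rangle\le -1\}$, $\bar E_{\bar g}=\{a\in L:\langle\bar g,a\rangle=-1\}$; let $I_g$, $E_g$ be the connected components of $\pi^{-1}(\bar I_{\bar g})$, $\pi^{-1}(\bar E_{\bar g})$ containing $g$; $E_g$ separates $\tilde L$ into two components, the closure of one being $I_g$; let $H_g$ be the closure of the other (so $\partial H_g=\partial I_g=E_g$). Let $\Gamma\subset\tilde G$ be a discrete subgroup of finite level $k$ (the index of $\Gamma\cap Z$ in the infinite cyclic centre $Z$ of $\tilde G$), let $\bar\Gamma$ be its image in $\mathrm{PSU}(1,1)$, and let $u\in\mathbb D$ be a point fixed by a nontrivial element of $\bar\Gamma$, with isotropy group $\bar\Gamma_u$ of order $p$. Assume $p>k$ and (after conjugation) $u=0$. Put $\vartheta=\pi k/p$; the isotropy group $\Gamma_u$ is infinite cyclic generated by $r_d=(0,-\vartheta,1)$, which acts by $(z,\alpha,r)\mapsto(ze^{i\vartheta},\alpha-\vartheta,r)$. For $x$ in the orbit $\Gamma(u)$ let $T(x)=\{g\in\Gamma: g(u)=x\}$ and $Q_x=\bigcap_{g\in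 T(x)}H_g$; in particular $T(u)=\Gamma_u$ and $Q_u=\bigcap_{m\in\mathbb Z}H_{r_d^m}$. *)

From HB Require Import structures.
From mathcomp Require Import all_boot all_order all_algebra.
From mathcomp Require Import all_classical all_reals all_analysis.
Set Implicit Arguments. Unset Strict Implicit. Unset Printing Implicit Defensive.
Import Order.TTheory GRing.Theory Num.Theory.
Import numFieldNormedType.Exports.
Local Open Scope classical_set_scope.
Local Open Scope ring_scope.

(* MathComp-Analysis, R : realType.
   A point (z, alpha, r) of C x R x R is encoded as ((x, y), alpha, r)
   with z = x + i y.  A point of C^2 is encoded as ((zx,zy),(wx,wy)). *)
Notation pt R := (R * R * R * R)%type.

Section Defs.
Variable R : realType.

Definition pz (a : pt R) : R * R := a.1.1.
Definition palpha (a : pt R) : R := a.1.2.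
Definition pr (a : pt R) : R := a.2.

Definition Ltil : set (pt R) :=
  [set a | 0 < pr a /\ (pz a).1 ^+ 2 + (pz a).2 ^+ 2 < pr a ^+ 2].

Definition piL (a : pt R) : (R * R) * (R * R) :=
  (pz a, (pr a * cos (palpha a), pr a * sin (palpha a))).

(* <(z1,w1),(z2,w2)> = Re(z1 conj z2 - w1 conj w2) *)
Definition form (a b : (R * R) * (R * R)) : R :=
  (a.1.1 * b.1.1 + a.1.2 * b.1.2) - (a.2.1 * b.2.1 + a.2.2 * b.2.2).

Definition preIbar (g : pt R) : set (pt R) :=
  [set a | Ltil a /\ form (piL g) (piL a) <= -1].
Definition preEbar (g : pt R) : set (pt R) :=
  [set a | Ltil a /\ form (piL g) (piL a) = -1].

Definition Ig (g : pt R) : set (pt R) := connected_component (preIbar g) g.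
Definition Eg (g : pt R) : set (pt R) := connected_component (preEbar g) g.

(* H_g : closure (in \tilde L) of the component of \tilde L \ E_g other than
   the interior side I_g \ E_g, i.e. of \tilde L \ I_g (since E_g <= I_g). *)
Definition Hg (g : pt R) : set (pt R) := closure (Ltil `\` Ig g) `&` Ltil.

Definition rd_pow (th : R) (m : int) : pt R := ((0, 0), - (m%:~R * th), 1).

Definition Qu (th : R) : set (pt R) := [set a | forall m : int, Hg (rd_pow th m) a].

Definition Xe : set (R * R) :=
  [set ar | 0 < ar.2 /\ (ar.2 * cos ar.1 <= 1 \/ pi / 2 <= `|ar.1|)].
Definition tau_pow (th : R) (m : int) (ar : R * R) : R * R :=
  (ar.1 - m%:~R * th, ar.2).
Definition Xu (th : R) : set (R * R) :=
  [set ar | forall m : int, (tau_pow th m @` Xe) ar].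

End Defs.

From Pilot Require Import Defs.
From HB Require Import structures.
From mathcomp Require Import all_boot all_order all_algebra.
From mathcomp Require Import all_classical all_reals all_analysis.
From mathcomp Require Import ring lra.
Import Order.TTheory GRing.Theory Num.Theory.
Import numFieldNormedType.Exports.
Local Open Scope classical_set_scope.
Local Open Scope ring_scope.

(* For a lift g = (0, -c, 1) of a rotation, <pi g, pi a> = -r cos (alpha + c), so
   pi^-1(Ibar_g) is the region r cos (alpha + c) >= 1.  On a connected subset of it
   cos (alpha + c) never vanishes, hence the component I_g is the part where moreover
   |alpha + c| < pi/2, and H_g is its closed complement in Ltil:
   r cos (alpha + c) <= 1 or |alpha + c| >= pi/2, i.e. (alpha + c, r) in X_e.
   As r_d^m = (0, -m theta, 1), intersecting over m yields X_u.  Finally some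
   alpha + m theta lies within theta/2 of 0, where cos >= cos (theta/2) > 0, and
   r cos (alpha + m theta) <= 1 there bounds r. *)

Section Preliminaries.
Variable R : realType.

Lemma continuous_line (V : normedModType R) (a v : V) :
  continuous (fun t : R => a + t *: v).
Proof.
move=> t; apply: cvgD; first exact: cvg_cst.
by apply: cvgZ; [exact: cvg_id | exact: cvg_cst].
Qed.

Lemma connected_segment (V : normedModType R) (a b : V) :
  connected [set a + t *: (b - a) | t in `[0, 1]].
Proof.
apply: connected_continuous_connected; first exact: segment_connected.
exact/continuous_subspaceT/continuous_line.
Qed.

Lemma closure_right_limit (T : topologicalType) (A : set T) (f : R -> T) (e : R) :
  0 < e -> {for 0, continuous f} -> (forall s, 0 < s < e -> A (f s)) ->
  closure A (f 0).
Proof.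
move=> e0 f0 fA N /f0 /nbhs_ballP[d /= d0 dN].
have [de_d de_e] : Num.min d e <= d /\ Num.min d e <= e by rewrite !ge_min !lexx orbT.
have de0 : 0 < Num.min d e by rewrite lt_min d0.
exists (f (Num.min d e / 2)); split.
  by apply: fA; apply/andP; split; lra.
by apply: dN; rewrite -ball_normE /= sub0r normrN gtr0_norm; lra.
Qed.

Lemma cos_le_norm (x y : R) : `|x| <= `|y| -> `|y| <= pi -> cos y <= cos x.
Proof.
move=> xy ypi.
have x0pi : `|x| \in `[0, pi] by rewrite in_itv /= normr_ge0 (le_trans xy ypi).
have y0pi : `|y| \in `[0, pi] by rewrite in_itv /= normr_ge0 ypi.
by rewrite -(cos_norm x) -(cos_norm y) leNgt ltr_cos // -leNgt.
Qed.

Lemma cos_lt_norm (x y : R) : `|x| < `|y| -> `|y| <= pi -> cos y < cos x.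
Proof.
move=> xy ypi.
have x0pi : `|x| \in `[0, pi] by rewrite in_itv /= normr_ge0 (le_trans (ltW xy) ypi).
have y0pi : `|y| \in `[0, pi] by rewrite in_itv /= normr_ge0 ypi.
by rewrite -(cos_norm x) -(cos_norm y) ltr_cos.
Qed.

Lemma interval_cos_neq0_norm_lt (I : set R) :
  is_interval I -> I 0 -> (forall x, I x -> cos x != 0) ->
  forall x, I x -> `|x| < pi / 2.
Proof.
move=> intI I0 Icos x Ix; rewrite ltNge; apply/negP => xpi.
have pi0 := pi_gt0 R.
have [x0 | x0] := lerP 0 x.
- have : I (pi / 2) by apply: (intI 0 x) => //; rewrite ger0_norm // in xpi; lra.
  by move/Icos; rewrite cos_pihalf eqxx.
- have : I (- (pi / 2)) by apply: (intI x 0) => //; rewrite ltr0_norm // in xpi; lra.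
  by move/Icos; rewrite cosN cos_pihalf eqxx.
Qed.

Lemma pt_lineE (a v : pt R) (t : R) :
  a + t *: v = ((a.1.1.1 + t * v.1.1.1, a.1.1.2 + t * v.1.1.2),
                a.1.2 + t * v.1.2, a.2 + t * v.2).
Proof. by []. Qed.

Lemma continuous_palpha : continuous (@palpha R).
Proof. by move=> a; apply: cvg_comp; [exact: cvg_fst | exact: cvg_snd]. Qed.

Lemma continuous_pr : continuous (@pr R).
Proof. by move=> a; exact: cvg_snd. Qed.

End Preliminaries.

Section RotationLift.
Variables (R : realType) (c : R).

Definition rotation_lift : pt R := ((0, 0), - c, 1).

Lemma continuous_palphaD : continuous (fun a : pt R => palpha a + c).
Proof. by move=> a; apply: cvgD; [exact: continuous_palpha | exact: cvg_cst]. Qed.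

Lemma continuous_pr_cos : continuous (fun a : pt R => pr a * cos (palpha a + c)).
Proof.
move=> a; apply: continuousM; first exact: continuous_pr.
exact: continuous_comp (continuous_palphaD a) (@continuous_cos R _).
Qed.

Lemma form_rotation_lift (a : pt R) :
  Defs.form (piL rotation_lift) (piL a) = - (pr a * cos (palpha a + c)).
Proof. by rewrite /Defs.form /piL /= cosD cosN sinN; ring. Qed.

Lemma preIbar_rotation_lift (a : pt R) :
  preIbar rotation_lift a <-> Ltil a /\ 1 <= pr a * cos (palpha a + c).
Proof. by rewrite /preIbar /= form_rotation_lift lerN2. Qed.

Definition Irot : set (pt R) :=
  [set a | Ltil a /\ `|palpha a + c| < pi / 2 /\ 1 <= pr a * cos (palpha a + c)].

Lemma Ig_rotation_lift_sub : Ig rotation_lift `<=` Irot.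
Proof.
move=> b [C [Cg CI Cconn] Cb].
have [Lb b1] := (preIbar_rotation_lift b).1 (CI b Cb).
split=> //; split=> //.
apply: (@interval_cos_neq0_norm_lt _ [set palpha a + c | a in C]); last by exists b.
- apply/connected_intervalP/(connected_continuous_connected Cconn).
  exact/continuous_subspaceT/continuous_palphaD.
- by exists rotation_lift => //; rewrite /palpha /= addNr.
- move=> _ [a Ca <-]; apply/eqP => cos0.
  by have := ((preIbar_rotation_lift a).1 (CI a Ca)).2; rewrite cos0 mulr0 ler10.
Qed.

Lemma Irot_sub_Ig : Irot `<=` Ig rotation_lift.
Proof.
move=> a [La [beta_lt a1]].
have [r0 za] := La; rewrite /pr /palpha /pz in beta_lt a1 r0 za.
have r1 : 1 <= a.2 by have := cos_le1 (a.1.2 + c); nra.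
pose a0 : pt R := ((0, 0), - c, a.2).
have in01 (t : R) : `[0, 1]%classic t -> 0 <= t <= 1 by rewrite /= in_itv.
have i0 : `[0, 1]%classic (0 : R) by rewrite /= in_itv /= lexx ler01.
have i1 : `[0, 1]%classic (1 : R) by rewrite /= in_itv /= lexx ler01.
exists ([set rotation_lift + t *: (a0 - rotation_lift) | t in `[0, 1]] `|`
        [set a0 + t *: (a - a0) | t in `[0, 1]]); last first.
  by right; exists 1; rewrite ?scale1r ?subrKC.
split.
- by left; exists 0; rewrite ?scale0r ?addr0.
- move=> _ [[t /in01/andP[t0 t1] <-] | [t /in01/andP[t0 t1] <-]];
    apply/preIbar_rotation_lift; rewrite pt_lineE /Ltil /pr /pz /palpha /=.
  + have -> : - c + t * (- c - - c) + c = 0 by ring.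
    have : 0 <= t * (a.2 - 1) by apply: mulr_ge0; lra.
    rewrite cos0 mulr1 subrr mulr0 addr0 expr0n /= addr0 => ?.
    by split; [split|]; nra.
  + have -> : - c + t * (a.1.2 - - c) + c = t * (a.1.2 + c) by ring.
    have -> : a.2 + t * (a.2 - a.2) = a.2 by ring.
    split; first split=> //.
      have t2 : t ^+ 2 <= 1 by rewrite expr_le1.
      have := addr_ge0 (sqr_ge0 a.1.1.1) (sqr_ge0 a.1.1.2); nra.
    apply: le_trans a1 _; rewrite ler_pM2l //; apply: cos_le_norm.
      by rewrite normrM (ger0_norm t0); have := normr_ge0 (a.1.2 + c); nra.
    by have := pi_gt0 R; lra.
- apply: connectedU; [| exact: connected_segment | exact: connected_segment].
  by exists a0; split; [exists 1; rewrite ?scale1r ?subrKC | exists 0; rewrite ?scale0r ?addr0].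
Qed.

Lemma Ig_rotation_lift : Ig rotation_lift = Irot.
Proof. by apply/seteqP; split; [exact: Ig_rotation_lift_sub | exact: Irot_sub_Ig]. Qed.

Definition Hrot : set (pt R) :=
  [set a | pr a * cos (palpha a + c) <= 1 \/ pi / 2 <= `|palpha a + c|].

Lemma closed_Hrot : closed Hrot.
Proof.
apply: closedU.
  apply: (@preimage_closed _ R _ [set x | x <= 1]); last exact: closed_le.
  by move=> a _; exact: continuous_pr_cos.
apply: (@preimage_closed _ R _ [set x | pi / 2 <= x]); last exact: closed_ge.
by move=> a _; apply: continuous_comp (continuous_palphaD a) (@norm_continuous _ _ _).
Qed.

Lemma closure_Ltil_setD_Irot : closure (@Ltil R `\` Irot) `<=` Hrot.
Proof.
have LH : @Ltil R `\` Irot `<=` Hrot.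
  move=> a [La notIa]; have [a1 | a1] := leP (pr a * cos (palpha a + c)) 1; first by left.
  by right; rewrite /= leNgt; apply/negP => beta_lt; apply: notIa; do 2?split=> //; exact: ltW.
by move=> a /(closureS LH); rewrite -(closure_id Hrot).1 //; exact: closed_Hrot.
Qed.

(* Turning the angle away from [-c] strictly decreases [r cos (alpha + c)],
   so points where it equals 1 are limits of points outside [Irot]. *)
Lemma Irot_edge_closure (a : pt R) :
  Ltil a -> `|palpha a + c| < pi / 2 -> pr a * cos (palpha a + c) = 1 ->
  closure (@Ltil R `\` Irot) a.
Proof.
move=> La beta_lt a1.
have pi0 := pi_gt0 R.
have r0 : 0 < pr a by case: La.
pose sg : R := if 0 <= palpha a + c then 1 else -1.
pose f (s : R) : pt R := a + s *: ((0, 0), sg, 0).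
have -> : a = f 0 by rewrite /f scale0r addr0.
apply: (@closure_right_limit _ _ _ _ (pi / 2)); [lra | exact: continuous_line |].
move=> s /andP[s0 spi]; split.
  by move: La; rewrite /f pt_lineE /Ltil /pr /pz /= !mulr0 !addr0.
move=> [_ [_]]; rewrite /f pt_lineE /pr /palpha /= mulr0 addr0.
have -> : a.1.2 + s * sg + c = palpha a + c + sg * s by rewrite /palpha; ring.
have normE : `|palpha a + c + sg * s| = `|palpha a + c| + s.
  rewrite /sg; case: ifP => [b0 | /negbT]; last rewrite -ltNge => b0.
    by rewrite mul1r !ger0_norm //; lra.
  by rewrite mulN1r !ltr0_norm //; lra.
have : cos (palpha a + c + sg * s) < cos (palpha a + c).
  by apply: cos_lt_norm; rewrite normE; have := normr_ge0 (palpha a + c); lra.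
by rewrite -(ltr_pM2l r0) a1; lra.
Qed.

Lemma Hg_rotation_lift :
  Hg rotation_lift = [set a | Ltil a /\ Xe (palpha a + c, pr a)].
Proof.
rewrite /Hg Ig_rotation_lift; apply/seteqP; split=> a.
  by move=> [/closure_Ltil_setD_Irot Ha La]; split=> //; split=> //; case: La.
move=> [La [r0 hX]]; split=> //.
have [[_ [beta_lt a1]] | notIa] := pselect (Irot a); last exact: subset_closure.
apply: Irot_edge_closure => //.
by case: hX => [a_le1 | ]; [apply/le_anti; rewrite a_le1 a1 | have := pi_gt0 R; lra].
Qed.

End RotationLift.

Section IsotropyRegion.
Variable R : realType.

Lemma Hg_rd_pow (th : R) (m : int) (a : pt R) :
  Hg (rd_pow th m) a <-> Ltil a /\ Xe (palpha a + m%:~R * th, pr a).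
Proof. by rewrite [rd_pow th m]/(rotation_lift R (m%:~R * th)) Hg_rotation_lift. Qed.

Lemma XuP (th : R) (ar : R * R) :
  Xu th ar <-> forall m : int, Xe (ar.1 + m%:~R * th, ar.2).
Proof.
case: ar => al r; split=> [Xar m | Xar m].
- by have [[al' r'] Xe' [<- <-]] := Xar m; rewrite /= subrK.
- by exists (al + m%:~R * th, r) => //; rewrite /tau_pow /= addrK.
Qed.

Lemma QuE (th : R) : Qu th = [set a | Ltil a /\ Xu th (palpha a, pr a)].
Proof.
apply/seteqP; split=> a.
- move=> Qa; have [La _] := (Hg_rd_pow th 0 a).1 (Qa 0).
  by split=> //; apply/XuP => m; have [] := (Hg_rd_pow th m a).1 (Qa m).
- by move=> [La /XuP Xa] m; apply/Hg_rd_pow.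
Qed.

Lemma Xu_bound (th al r : R) :
  0 < th < pi -> Xu th (al, r) -> r <= 1 / cos (th / 2).
Proof.
move=> /andP[th0 thpi] /XuP Xa.
have pi0 := pi_gt0 R.
(* [n] is the integer nearest to [al / th], so [al - n th] lies in [[-th/2, th/2]]. *)
have /andP[n_le n_gt] := floor_itv (al / th + 1 / 2); rewrite intrD in n_gt.
set n := Num.floor (al / th + 1 / 2) in n_le n_gt.
have [r0 hX] := Xa (- n); rewrite /= mulrNz in hX.
have alE : al = al / th * th by rewrite divfK ?gt_eqF.
have beta_le : `|al + - n%:~R * th| <= th / 2.
  by rewrite ler_norml alE; apply/andP; split; nra.
have cos_pos : 0 < cos (th / 2) by apply: cos_gt0_pihalf; apply/andP; split; lra.
have cos_le : cos (th / 2) <= cos (al + - n%:~R * th).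
  by apply: cos_le_norm; rewrite (@gtr0_norm _ (th / 2)); lra.
case: hX => [hX | ]; last lra.
rewrite ler_pdivlMr //; apply: le_trans hX.
by rewrite ler_wpM2l // ltW.
Qed.

End IsotropyRegion.

Theorem mainTheorem1 (R : realType) (k p : nat) :
  (0 < k)%N -> (k < p)%N ->
  let th : R := pi * k%:R / p%:R in
  Qu th = [set a | Ltil a /\ Xu th (palpha a, pr a)] /\
  (forall a : pt R, Qu th a -> pr a <= 1 / cos (th / 2)).
Proof.
move=> k0 kp th; split; first exact: QuE.
have th_range : 0 < th < pi.
  have p0 : (0 < p)%N by apply: leq_trans kp.
  rewrite divr_gt0 ?mulr_gt0 ?pi_gt0 ?ltr0n //=.
  by rewrite ltr_pdivrMr ?ltr0n // ltr_pM2l ?pi_gt0 // ltr_nat.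
by move=> a; rewrite QuE => -[_]; exact: Xu_bound.
Qed.
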